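(* Let $L$ be an even hyperbolic lattice and $M$ an even negative definite lattice, and view $\mathbb H_L$ as the subset of $\mathbb H_{L\oplus M}$ consisting of vectors with zero projection onto $M\otimes\mathbb R$. Then there are chambers $\mathcal D_L$ of $L$ and $\mathcal D_{L\oplus M}$ of $L\oplus M$ such that $\overline{\mathcal D_L}=\overline{\mathcal D_{L\oplus M}}\cap\mathbb H_L$ (closures taken in $\mathbb H_L$, resp. $\mathbb H_{L\oplus M}$).
   Context: All lattices are even: a lattice is a free $\mathbb Z$-module $L$ of finite rank with a non-degenerate symmetric bilinear form $(x.y)\in\mathbb Z$ such that $x^2:=(x.x)$ is even for all $x$. $L$ is hyperbolic if its signature is $(1,\mathrm{rk}L-1)$. A root is a vector $r\in L$ with $r^2=-2$. For hyperbolic $L$, fix a connected component $\mathcal P_L$ of $\{x\in L\otimes\mathbb R: x^2>0\}$ and let $\mathbb H_L=\{x\in\mathcal P_L: x^2=1\}$ (for $L\oplus M$ take the component containing $\mathcal P_L$). The chambers are the connected components of $\mathbb H_L\setminus\bigcup_r r^\perp$ (union over all roots $r$ of $L$). *)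

From HB Require Import structures.
From mathcomp Require Import all_boot all_order all_algebra.
From mathcomp Require Import all_classical all_reals all_analysis.
Set Implicit Arguments. Unset Strict Implicit. Unset Printing Implicit Defensive.
Import Order.TTheory GRing.Theory Num.Theory.
Import numFieldNormedType.Exports.
Local Open Scope ring_scope.
Local Open Scope classical_set_scope.

(* A lattice of rank n is Z^n with Gram matrix G : 'M[int]_n. *)

Definition zform (n : nat) (G : 'M[int]_n) (x y : 'rV[int]_n) : int :=
  (x *m G *m y^T) ord0 ord0.

Definition rform (R : realType) (n : nat) (G : 'M[int]_n) (x y : 'rV[R]_n) : R :=
  (x *m map_mx intr G *m y^T) ord0 ord0.

Definition even_lattice (n : nat) (G : 'M[int]_n) : Prop :=
  G^T = G /\ \det G != 0 /\ forall x : 'rV[int]_n, (2 %| zform G x x)%Z.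

Definition pos_def_subspace (R : realType) (n k : nat) (G : 'M[int]_n)
    (A : 'M[R]_(k, n)) : Prop :=
  row_free A /\ forall v : 'rV[R]_k, v != 0 -> 0 < rform G (v *m A) (v *m A).

(* signature (1, n-1): non-degenerate (part of even_lattice) and the maximal
   dimension of a positive definite subspace of L (x) R is 1 *)
Definition hyperbolic (R : realType) (n : nat) (G : 'M[int]_n) : Prop :=
  (exists A : 'M[R]_(1, n), pos_def_subspace G A) /\
  ~ (exists A : 'M[R]_(2, n), pos_def_subspace G A).

Definition neg_definite (R : realType) (m : nat) (H : 'M[int]_m) : Prop :=
  forall x : 'rV[R]_m, x != 0 -> rform H x x < 0.

Definition gram_sum (n m : nat) (G : 'M[int]_n) (H : 'M[int]_m) : 'M[int]_(n + m) :=
  block_mx G 0 0 H.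

Definition pos_cone (R : realType) (n : nat) (G : 'M[int]_n) : set 'rV[R]_n :=
  [set x | 0 < rform G x x].

Definition is_pos_component (R : realType) (n : nat) (G : 'M[int]_n)
    (P : set 'rV[R]_n) : Prop :=
  exists x0, pos_cone G x0 /\ P = connected_component (pos_cone G) x0.

Definition hyp_space (R : realType) (n : nat) (G : 'M[int]_n) (P : set 'rV[R]_n)
    : set 'rV[R]_n :=
  [set x | P x /\ rform G x x = 1].

Definition is_root (n : nat) (G : 'M[int]_n) (r : 'rV[int]_n) : Prop :=
  zform G r r = - 2.

Definition chamber_domain (R : realType) (n : nat) (G : 'M[int]_n)
    (P : set 'rV[R]_n) : set 'rV[R]_n :=
  [set x | hyp_space G P x /\
     forall r : 'rV[int]_n, is_root G r -> rform G (map_mx intr r) x != 0].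

Definition is_chamber (R : realType) (n : nat) (G : 'M[int]_n)
    (P : set 'rV[R]_n) (D : set 'rV[R]_n) : Prop :=
  exists x, chamber_domain G P x /\ D = connected_component (chamber_domain G P) x.

(* closure of A taken in the subspace S (= ambient closure intersected with S) *)
Definition closure_in (R : realType) (n : nat) (S A : set 'rV[R]_n) : set 'rV[R]_n :=
  closure A `&` S.

Definition emb (R : realType) (n m : nat) (x : 'rV[R]_n) : 'rV[R]_(n + m) :=
  row_mx x 0.

From HB Require Import structures.
From mathcomp Require Import all_boot all_order all_algebra.
From mathcomp Require Import all_classical all_reals all_analysis.
From mathcomp Require Import ring lra zify.
Import Order.TTheory GRing.Theory Num.Theory.
Import numFieldNormedType.Exports.
Set Implicit Arguments. Unset Strict Implicit. Unset Printing Implicit Defensive.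
Local Open Scope ring_scope.
Local Open Scope classical_set_scope.

(* Pick an integral vector q in the positive cone P and perturb it: u = q + eps v'
   with v' the projection to q^perp of a generic v, and z0 = (u, delta w) with w
   generic in M (x) R.  The closure of the chamber through p is the set of those
   y in the hyperbolic space with (r.p)(r.y) >= 0 for all roots r, so it suffices
   to compare these sign conditions for u and z0.  A root r = (a, b) of L (+) M
   either has b = 0 (a is a root of L and r.z0 = a.u), or a = 0 (r is orthogonal
   to H_L), or a, b <> 0.  In the last case a.a = -2 - b.b >= 0 since M is even
   and negative definite, so a.x has the sign of the integer a.q for every x in P,
   and so does r.z0 = a.q + eps a.v' + delta b.w: both perturbations are small
   compared with |a.q| >= 1 by Cauchy-Schwarz in the negative definite spaces
   q^perp and M (x) R. *)

Section Chambers.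
Variable R : realType.
Local Notation toR r := (map_mx intr r : 'rV[R]_ _).

Lemma quad_le0_discr (A B C : R) :
  (forall s t : R, s ^+ 2 * A + 2 * s * t * B + t ^+ 2 * C <= 0) -> B ^+ 2 <= A * C.
Proof.
move=> hq; have [A0|An] := eqVneq A 0.
  have C0 : C <= 0 by have := hq 0 1; rewrite expr0n expr1n /=; lra.
  have [B0|Bn] := eqVneq B 0; first by rewrite A0 B0 expr0n mul0r.
  have := hq ((1 - C) / (2 * B)) 1; rewrite A0 expr1n.
  have -> : 2 * ((1 - C) / (2 * B)) * 1 * B = 1 - C by field.
  lra.
have A_lt0 : A < 0 by rewrite lt_neqAle An /=; have := hq 1 0; rewrite expr0n expr1n /=; lra.
have := hq B (- A).
have -> : B ^+ 2 * A + 2 * B * - A * B + (- A) ^+ 2 * C = A * (A * C - B ^+ 2) by ring.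
by rewrite nmulr_rle0 // subr_ge0.
Qed.

Lemma perturb_sign (Y X1 X2 : R) :
  4 * X1 ^+ 2 < Y ^+ 2 -> 4 * X2 ^+ 2 < Y ^+ 2 -> 0 < Y * (Y + X1 + X2).
Proof.
have sqrD (X : R) : 0 <= Y ^+ 2 + 4 * (Y * X) + 4 * X ^+ 2.
  by rewrite (_ : _ + _ = (Y + 2 * X) ^+ 2) ?sqr_ge0 //; ring.
have := sqrD X1; have := sqrD X2.
rewrite (_ : Y * (Y + X1 + X2) = Y ^+ 2 + Y * X1 + Y * X2); last by ring.
lra.
Qed.

Lemma sqr_gt0 (s : R) : s != 0 -> 0 < s ^+ 2.
Proof. by move=> s0; rewrite exprn_even_gt0. Qed.

Lemma intr_sqr_ge1 (z : int) : z != 0 -> 1 <= (z%:~R : R) ^+ 2.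
Proof. by move=> z0; rewrite -rmorphXn /= ler1z; lia. Qed.

Lemma mulr_gt0_same_sign (Y A B : R) : 0 < Y * A -> 0 < Y * B -> 0 < A * B.
Proof.
move=> YA YB; have Y0 : Y != 0 by apply: contraTneq YA => ->; rewrite mul0r ltxx.
by have := mulr_gt0 YA YB; rewrite mulrACA pmulr_rgt0 // -expr2; exact: sqr_gt0.
Qed.

Definition tiny (o : R) := (4 * (o + 1))^-1.

Lemma tiny_gt0 o : 0 <= o -> 0 < tiny o.
Proof. by move=> o0; rewrite invr_gt0; lra. Qed.

Lemma tiny_sqrM_lt o : 0 <= o -> 16 * (tiny o ^+ 2 * o) < 1.
Proof.
move=> o0; have d0 : 0 < 4 * (o + 1) by lra.
rewrite (_ : _ * _ = 16 * o / (4 * (o + 1)) ^+ 2); last by rewrite /tiny; field; lra.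
rewrite ltr_pdivrMr ?exprn_gt0 // mul1r; have := sqr_ge0 o.
rewrite (_ : (4 * (o + 1)) ^+ 2 = 16 * o ^+ 2 + 32 * o + 16); last by ring.
lra.
Qed.

Lemma tiny_perturb o (X Y : R) : 0 <= o -> 0 < Y ^+ 2 ->
  X ^+ 2 <= 3 * Y ^+ 2 * o -> 4 * (tiny o * X) ^+ 2 < Y ^+ 2.
Proof.
move=> o0 Y0 hX; have t16 := tiny_sqrM_lt o0.
have t0 : 0 <= tiny o ^+ 2 by exact: sqr_ge0.
have hX' : tiny o ^+ 2 * X ^+ 2 <= tiny o ^+ 2 * (3 * Y ^+ 2 * o) by exact: ler_wpM2l.
rewrite exprMn; nra.
Qed.

Lemma intr_row_neq0 k (b : 'rV[int]_k) : b != 0 -> toR b != 0.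
Proof.
apply: contra => /eqP/rowP b0; apply/eqP/rowP => i.
by have /eqP := b0 i; rewrite !mxE intr_eq0 => /eqP.
Qed.

Section BilinearForm.
Variables (k : nat) (G : 'M[int]_k).
Implicit Types (x y z a b : 'rV[R]_k).

Lemma rformDl x y z : rform G (x + y) z = rform G x z + rform G y z.
Proof. by rewrite /rform !mulmxDl mxE. Qed.

Lemma rformDr x y z : rform G x (y + z) = rform G x y + rform G x z.
Proof. by rewrite /rform linearD /= mulmxDr mxE. Qed.

Lemma rformZl (c : R) x y : rform G (c *: x) y = c * rform G x y.
Proof. by rewrite /rform -!scalemxAl mxE. Qed.

Lemma rformZr (c : R) x y : rform G x (c *: y) = c * rform G x y.
Proof. by rewrite /rform linearZ /= -scalemxAr mxE. Qed.

Lemma rform0l y : rform G 0 y = 0.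
Proof. by rewrite -(scale0r 0) rformZl mul0r. Qed.

Lemma rform0r x : rform G x 0 = 0.
Proof. by rewrite -(scale0r 0) rformZr mul0r. Qed.

Lemma rformBr x y z : rform G x (y - z) = rform G x y - rform G x z.
Proof. by rewrite rformDr -scaleN1r rformZr mulN1r. Qed.

Lemma rformE x y : rform G x y = \sum_j \sum_i x ord0 i * (G i j)%:~R * y ord0 j.
Proof.
rewrite /rform mxE; apply: eq_bigr => j _; rewrite !mxE big_distrl /=.
by apply: eq_bigr => i _; rewrite !mxE.
Qed.

Lemma rform_intr (r s : 'rV[int]_k) : rform G (toR r) (toR s) = (zform G r s)%:~R.
Proof. by rewrite /rform /zform map_trmx -!map_mxM mxE. Qed.

Lemma rform_nondeg y : \det G != 0 -> y != 0 -> exists z, rform G z y != 0.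
Proof.
move=> dG y0; apply/not_existsP => /= orth; move/negP: y0; apply.
have uG : (map_mx intr G : 'M[R]_k) \in unitmx by rewrite unitmxE unitfE det_map_mx intr_eq0.
have Gy0 : (map_mx intr G : 'M[R]_k) *m y^T = 0.
  apply/row_matrixP => i; rewrite row0 rowE mulmxA.
  apply/rowP => j; rewrite (ord1 j) [RHS]mxE.
  by have /negP/negbNE/eqP := orth (delta_mx 0 i).
by rewrite -trmx_eq0 -(mulKmx uG y^T) Gy0 mulmx0.
Qed.

Hypothesis sG : G^T = G.

Lemma rformC x y : rform G x y = rform G y x.
Proof.
rewrite /rform; transitivity ((x *m map_mx intr G *m y^T)^T ord0 ord0).
  by rewrite [RHS]mxE.
by rewrite !trmx_mul trmxK map_trmx sG mulmxA.
Qed.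

Lemma rform_comb_sqr (s t : R) x y :
  rform G (s *: x + t *: y) (s *: x + t *: y) =
  s ^+ 2 * rform G x x + 2 * s * t * rform G x y + t ^+ 2 * rform G y y.
Proof.
rewrite !(rformDl, rformDr, rformZl, rformZr) (rformC y x); ring.
Qed.

Lemma rform_CS_le0 x y :
  (forall s t : R, rform G (s *: x + t *: y) (s *: x + t *: y) <= 0) ->
  rform G x y ^+ 2 <= rform G x x * rform G y y.
Proof. by move=> le0; apply: quad_le0_discr => s t; rewrite -rform_comb_sqr. Qed.

(* [x.x] times the orthogonal projection of [a] to [x^perp], so no division is needed. *)
Definition perp x a := rform G x x *: a - rform G a x *: x.

Lemma rform_perp x a : rform G x (perp x a) = 0.
Proof. by rewrite /perp rformBr !rformZr (rformC x a); ring. Qed.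

Lemma rform_perp_r x a b :
  rform G b (perp x a) = rform G x x * rform G b a - rform G a x * rform G b x.
Proof. by rewrite /perp rformBr !rformZr. Qed.

Lemma rform_perp_sqr x a :
  rform G (perp x a) (perp x a) =
  rform G x x * (rform G x x * rform G a a - rform G a x ^+ 2).
Proof.
rewrite /perp -scaleNr rform_comb_sqr (rformC a x); ring.
Qed.

End BilinearForm.

Lemma pos_row_free k p (G : 'M[int]_k) (A : 'M[R]_(p, k)) :
  (forall v : 'rV[R]_p, v != 0 -> 0 < rform G (v *m A) (v *m A)) -> row_free A.
Proof.
move=> pos; rewrite -kermx_eq0; apply/eqP/row_matrixP => i; rewrite row0.
apply/eqP; apply: contraT => v0; have := pos _ v0.
by rewrite -row_mul mulmx_ker row0 rform0l ltxx.
Qed.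

Section Hyperbolic.
Variables (k : nat) (G : 'M[int]_k).
Hypotheses (sG : G^T = G) (hG : hyperbolic R G).
Implicit Types (x y z a b : 'rV[R]_k).

Lemma hyperbolic_no_pos_plane x y :
  ~ (forall s t : R, (s != 0) || (t != 0) ->
       0 < rform G (s *: x + t *: y) (s *: x + t *: y)).
Proof.
move=> pos; apply: hG.2.
pose A : 'M[R]_(2, k) := \matrix_(i, j) (if i == ord0 then x ord0 j else y ord0 j).
have AE (w : 'rV[R]_2) : w *m A = w ord0 ord0 *: x + w ord0 (lift ord0 ord0) *: y.
  by apply/rowP => j; rewrite !mxE big_ord_recl big_ord1 !mxE.
have posA (w : 'rV[R]_2) : w != 0 -> 0 < rform G (w *m A) (w *m A).
  move=> w0; rewrite AE; apply: pos; apply: contraNT w0.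
  rewrite negb_or !negbK => /andP[/eqP w0 /eqP w1].
  apply/eqP/rowP => -[[|[|j]] lt_j] //; rewrite mxE.
  - by rewrite -w0; congr (w _ _); exact: val_inj.
  - by rewrite -w1; congr (w _ _); exact: val_inj.
by exists A; split; [apply: pos_row_free | ]; exact: posA.
Qed.

Lemma rform_orth_le0 x y : 0 < rform G x x -> rform G x y = 0 -> rform G y y <= 0.
Proof.
move=> x0 xy; rewrite leNgt; apply/negP => y0.
apply: (@hyperbolic_no_pos_plane x y) => s t st.
rewrite rform_comb_sqr // xy mulr0 addr0.
have := sqr_ge0 s; have := sqr_ge0 t.
by case/orP: st => /sqr_gt0; nra.
Qed.

Lemma pos_rform_neq0 x y : 0 < rform G x x -> 0 < rform G y y -> rform G x y != 0.
Proof. by move=> x0 y0; apply/eqP => /(rform_orth_le0 x0); rewrite leNgt y0. Qed.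

Lemma rform_orth_CS x a b : 0 < rform G x x -> rform G x a = 0 -> rform G x b = 0 ->
  rform G a b ^+ 2 <= rform G a a * rform G b b.
Proof.
move=> x0 xa xb; apply: rform_CS_le0 => // s t; apply: rform_orth_le0 x0 _.
by rewrite rformDr !rformZr xa xb !mulr0 addr0.
Qed.

Lemma rform_reverse_CS x a : 0 < rform G x x ->
  rform G x x * rform G a a <= rform G a x ^+ 2.
Proof.
move=> x0; have := rform_orth_le0 x0 (rform_perp sG x a).
by rewrite rform_perp_sqr // pmulr_rle0 // subr_le0.
Qed.

Lemma rform_orth_bound q v a : 1 <= rform G q q -> rform G q v = 0 ->
  -2 <= rform G a a -> 1 <= rform G a q ^+ 2 ->
  rform G a v ^+ 2 <= 3 * rform G a q ^+ 2 * - rform G v v.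
Proof.
move=> q1 qv a2 Y1; have q0 : 0 < rform G q q by lra.
(* Cauchy-Schwarz in the negative semidefinite [q^perp], for [perp q a] and [v]. *)
have nu0 : 0 <= - rform G v v by rewrite oppr_ge0; exact: rform_orth_le0 q0 qv.
have := rform_orth_CS q0 (rform_perp sG q a) qv.
rewrite rform_perp_sqr // (rformC sG _ v) rform_perp_r // (rformC sG v a) (rformC sG v q) qv.
set Q := rform G q q; set A := rform G a a; set Y := rform G a q; set X := rform G a v.
set nu := - rform G v v; rewrite -(opprK (rform G v v)) -/nu mulr0 subr0 => cs.
have {}cs : Q * X ^+ 2 <= (Y ^+ 2 - Q * A) * nu.
  rewrite -(ler_pM2l q0) (_ : Q * (Q * X ^+ 2) = (Q * X) ^+ 2); last by ring.
  by rewrite (_ : Q * (_ * nu) = Q * (Q * A - Y ^+ 2) * - nu); last by ring.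
have QY : Y ^+ 2 * nu <= Q * (Y ^+ 2 * nu).
  by apply: ler_peMl => //; exact: mulr_ge0 (sqr_ge0 _) nu0.
have QAnu : 0 <= (Q * A + 2 * Q) * nu.
  have QA : Q * -2 <= Q * A by rewrite ler_pM2l.
  by apply: mulr_ge0 => //; lra.
have : Q * X ^+ 2 <= Q * ((Y ^+ 2 + 2) * nu) by nra.
rewrite ler_pM2l //; have : 0 <= (Y ^+ 2 - 1) * nu by rewrite mulr_ge0 // subr_ge0.
lra.
Qed.

Hypothesis dG : \det G != 0.

Lemma rform_orth_isotropic x y :
  0 < rform G x x -> rform G x y = 0 -> rform G y y = 0 -> y = 0.
Proof.
move=> x0 xy yy; apply/eqP; apply: contraT => y0.
have [z /negP []] := rform_nondeg dG y0.
have := rform_orth_CS x0 xy (rform_perp sG x z).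
rewrite yy mul0r rform_perp_r // (rformC sG y x) xy mulr0 subr0.
rewrite exprn_even_le0 //= mulf_eq0 (negbTE (lt0r_neq0 x0)) /=.
by rewrite (rformC sG y z).
Qed.

Lemma nonneg_rform_neq0 a z :
  a != 0 -> 0 <= rform G a a -> 0 < rform G z z -> rform G a z != 0.
Proof.
move=> a0 aa z0; apply: contra a0 => /eqP az; rewrite (rformC sG) in az.
apply/eqP; apply: (rform_orth_isotropic z0 az).
by apply/eqP; rewrite eq_le aa andbT (rform_orth_le0 z0 az).
Qed.

End Hyperbolic.

Section GramSum.
Variables (n m : nat) (G : 'M[int]_n) (H : 'M[int]_m).
Local Notation GM := (gram_sum G H).

Lemma rform_gram_sum (a c : 'rV[R]_n) (b d : 'rV[R]_m) :
  rform GM (row_mx a b) (row_mx c d) = rform G a c + rform H b d.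
Proof.
rewrite /rform /gram_sum map_block_mx mul_row_block tr_row_mx mul_row_col.
by rewrite !map_mx0 !mulmx0 ?mul0mx addr0 add0r mxE.
Qed.

Lemma zform_gram_sum (a c : 'rV[int]_n) (b d : 'rV[int]_m) :
  zform GM (row_mx a b) (row_mx c d) = zform G a c + zform H b d.
Proof.
rewrite /zform /gram_sum mul_row_block tr_row_mx mul_row_col.
by rewrite !mulmx0 ?mul0mx addr0 add0r mxE.
Qed.

Lemma zform_row_mx0 (a : 'rV[int]_n) : zform GM (row_mx a 0) (row_mx a 0) = zform G a a.
Proof. by rewrite zform_gram_sum (_ : zform H 0 0 = 0) ?addr0 // /zform !mul0mx mxE. Qed.

Lemma zform_row_0mx (b : 'rV[int]_m) : zform GM (row_mx 0 b) (row_mx 0 b) = zform H b b.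
Proof. by rewrite zform_gram_sum (_ : zform G 0 0 = 0) ?add0r // /zform !mul0mx mxE. Qed.

Lemma rform_row_emb (a y : 'rV[R]_n) (b : 'rV[R]_m) :
  rform GM (row_mx a b) (emb m y) = rform G a y.
Proof. by rewrite rform_gram_sum rform0r addr0. Qed.

Lemma rform_emb (x y : 'rV[R]_n) : rform GM (emb m x) (emb m y) = rform G x y.
Proof. exact: rform_row_emb. Qed.

Hypotheses (sG : G^T = G) (sH : H^T = H).

Lemma gram_sum_sym : GM^T = GM.
Proof. by rewrite /gram_sum tr_block_mx !trmx0 sG sH. Qed.

Hypotheses (hG : hyperbolic R G) (H_le0 : forall w : 'rV[R]_m, rform H w w <= 0).

Lemma gram_sum_pos_rform_neq0 (z p : 'rV[R]_(n + m)) :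
  0 < rform GM z z -> 0 < rform GM p p -> rform GM z p != 0.
Proof.
move=> z0 p0; apply/eqP => zp.
apply: (hyperbolic_no_pos_plane hG (x := lsubmx z) (y := lsubmx p)) => s t st.
have e : s *: z + t *: p =
    row_mx (s *: lsubmx z + t *: lsubmx p) (s *: rsubmx z + t *: rsubmx p).
  by rewrite -{1}(hsubmxK z) -{1}(hsubmxK p) !scale_row_mx add_row_mx.
have := rform_comb_sqr gram_sum_sym s t z p.
rewrite zp mulr0 addr0 e rform_gram_sum.
have := H_le0 (s *: rsubmx z + t *: rsubmx p).
have := sqr_ge0 s; have := sqr_ge0 t.
by case/orP: st => /sqr_gt0; nra.
Qed.

End GramSum.

Lemma neg_definite_le0 m (H : 'M[int]_m) :
  neg_definite R H -> forall w : 'rV[R]_m, rform H w w <= 0.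
Proof. by move=> nH w; have [->|/nH/ltW//] := eqVneq w 0; rewrite rform0l. Qed.

Lemma neg_even_zform_le m (H : 'M[int]_m) (b : 'rV[int]_m) :
  even_lattice H -> neg_definite R H -> b != 0 -> zform H b b <= -2.
Proof.
move=> [_ [_ ev]] nH b0; have := nH _ (intr_row_neq0 b0); rewrite rform_intr ltrz0.
by have /dvdzP[c ->] := ev b; lia.
Qed.

Lemma rform_continuous k (G : 'M[int]_k) (T : topologicalType) (f g : T -> 'rV[R]_k) :
  continuous f -> continuous g -> continuous (fun t => rform G (f t) (g t)).
Proof.
have coord (h : T -> 'rV[R]_k) i t :
    {for t, continuous h} -> {for t, continuous (fun s => h s ord0 i)}.
  by move=> ch; exact: (continuous_comp ch (@coord_continuous R 1 k ord0 i (h t))).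
move=> cf cg; under eq_fun do rewrite rformE.
apply: continuous_big => [|j _]; first exact: add_continuous.
apply: continuous_big => [|i _]; first exact: add_continuous.
move=> t; apply: (continuousM (s := fun x => f x ord0 i * _)); last exact: coord (cg t).
by apply: (continuousM (s := fun x => f x ord0 i)); [exact: coord (cf t) | exact: cst_continuous].
Qed.

Lemma rform_continuousl k (G : 'M[int]_k) (p : 'rV[R]_k) :
  continuous (fun z => rform G z p).
Proof. by apply: rform_continuous => // z; [exact: cvg_id | exact: cst_continuous]. Qed.

Lemma rform_continuousr k (G : 'M[int]_k) (p : 'rV[R]_k) :
  continuous (fun z => rform G p z).
Proof. by apply: rform_continuous => // z; [exact: cst_continuous | exact: cvg_id]. Qed.

Lemma line_continuous k (a b : 'rV[R]_k) : continuous (fun s : R => a + s *: b).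
Proof.
move=> s; have : {for s, continuous (fun s : R => a + s *: b)}.
  apply: continuousD; first exact: cst_continuous.
  by apply: continuousZ; [exact: cvg_id | exact: cst_continuous].
by [].
Qed.

Lemma connected_continuous_gt0 (T : topologicalType) (C : set T) (f : T -> R) a b :
  connected C -> continuous f -> (forall z, C z -> f z != 0) ->
  C a -> C b -> 0 < f a -> 0 < f b.
Proof.
move=> cC cf f_neq0 Ca Cb fa; rewrite lt_def f_neq0 //= leNgt; apply/negP => fb.
have /connected_intervalP fC : connected (f @` C).
  by apply: connected_continuous_connected => //; exact: continuous_subspaceT.
have [z Cz fz0] : (f @` C) 0.
  by apply: (fC (f b) (f a)); [exists b | exists a | rewrite (ltW fb) (ltW fa)].
by move: (f_neq0 z Cz); rewrite fz0 eqxx.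
Qed.

Lemma connected_component_path (T : topologicalType) (A : set T) (g : R -> T) :
  (forall s, 0 <= s <= 1 -> {for s, continuous g} /\ A (g s)) ->
  connected_component A (g 0) (g 1).
Proof.
move=> gA; have inI s : 0 <= s <= 1 -> `[0, 1]%classic s by rewrite /= in_itv.
apply: (@connected_component_max _ A (g @` `[0, 1])); last by exists 1 => //; apply: inI; lra.
- by exists 0 => //; apply: inI; lra.
- by move=> _ [s /= /[!in_itv] /gA[_ ?] <-].
apply: connected_continuous_connected; first exact: segment_connected.
by apply: continuous_in_subspaceT => s /set_mem /= /[!in_itv] /gA[].
Qed.

Lemma exists_gt0_near0 (T : topologicalType) (g : R -> T) (O : set T) :
  {for 0, continuous g} -> nbhs (g 0) O -> exists2 t, 0 < t & O (g t).
Proof.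
move=> cg /cg /nbhs_ballP[e /= e0 gO]; exists (e / 2); first lra.
by apply: gO; rewrite -ball_normE /= sub0r normrN gtr0_norm; lra.
Qed.

Definition normalize k (G : 'M[int]_k) (v : 'rV[R]_k) := (Num.sqrt (rform G v v))^-1 *: v.

Section Normalize.
Variables (k : nat) (G : 'M[int]_k).

Lemma normalize_continuous (T : topologicalType) (f : T -> 'rV[R]_k) t :
  continuous f -> 0 < rform G (f t) (f t) ->
  {for t, continuous (fun s => normalize G (f s))}.
Proof.
move=> cf ft0; apply: continuousZ; last exact: cf.
apply: continuousV; first by rewrite gt_eqF // sqrtr_gt0.
have ct : {for t, continuous (fun s => rform G (f s) (f s))}.
  exact: rform_continuous.
by have := continuous_comp ct (@sqrt_continuous R _).
Qed.

Lemma rform_normalize v : 0 < rform G v v ->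
  rform G (normalize G v) (normalize G v) = 1.
Proof.
move=> v0; rewrite /normalize rformZl rformZr mulrA -expr2 exprVn sqr_sqrtr ?ltW //.
by rewrite mulVf // gt_eqF.
Qed.

Lemma normalize_id v : rform G v v = 1 -> normalize G v = v.
Proof. by move=> v1; rewrite /normalize v1 sqrtr1 invr1 scale1r. Qed.

End Normalize.

Lemma invsqrt_gt0 (x : R) : 0 < x -> 0 < (Num.sqrt x)^-1.
Proof. by move=> x0; rewrite invr_gt0 sqrtr_gt0. Qed.

Definition pos_half_cone k (G : 'M[int]_k) (p : 'rV[R]_k) :=
  [set v | 0 < rform G v v /\ 0 < rform G v p].

Lemma rform_comb_sqr_gt0 k (G : 'M[int]_k) (p v : 'rV[R]_k) (s t : R) : G^T = G ->
  0 < rform G p p -> 0 < rform G v v -> 0 <= rform G v p ->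
  0 <= s -> 0 <= t -> 0 < s + t -> 0 < rform G (s *: p + t *: v) (s *: p + t *: v).
Proof.
move=> sG p0 v0 vp s0 t0 st; rewrite rform_comb_sqr // (rformC sG p v).
have : 0 <= 2 * s * t * rform G v p by rewrite !mulr_ge0.
have [s_eq0|/sqr_gt0 s2] := eqVneq s 0.
  have /sqr_gt0 t2 : t != 0 by apply: contraTneq st => ->; rewrite s_eq0 addr0 ltxx.
  by rewrite s_eq0 expr0n /= mulr0 !mul0r !add0r => _; exact: mulr_gt0.
by have := sqr_ge0 t; nra.
Qed.

Section PositiveCone.
Variables (k : nat) (G : 'M[int]_k).
Hypotheses (sG : G^T = G)
  (pos_neq0 : forall u v : 'rV[R]_k, 0 < rform G u u -> 0 < rform G v v -> rform G u v != 0).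

Lemma pos_componentE p : 0 < rform G p p ->
  connected_component (pos_cone G) p = pos_half_cone G p.
Proof.
move=> p0; have Cp : connected_component (pos_cone G) p p by exact: connected_component_refl.
apply/seteqP; split => v.
  move=> Cv; have v0 : 0 < rform G v v := connected_component_sub Cv.
  split => //; apply: (connected_continuous_gt0 (f := fun z => rform G z p)
    (@component_connected _ _ _) _ _ Cp Cv p0).
    exact: rform_continuousl.
  by move=> z /connected_component_sub z0; exact: pos_neq0.
move=> [v0 vp]; apply: (connected_component_trans Cp).
have := connected_component_path (A := pos_cone G) (g := fun s : R => p + s *: (v - p)).
rewrite scale0r addr0 scale1r [p + _]addrC subrK; apply => s /andP[s0 s1].
split; first exact: line_continuous.
rewrite /pos_cone /= (_ : p + _ = (1 - s) *: p + s *: v); last first.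
  by apply/rowP => i; rewrite !mxE; ring.
by apply: rform_comb_sqr_gt0 => //; [exact: ltW | lra | lra].
Qed.

Lemma pos_component_half_cone x0 p : connected_component (pos_cone G) x0 p ->
  connected_component (pos_cone G) x0 = pos_half_cone G p.
Proof.
move=> Cp; rewrite (same_connected_component Cp) pos_componentE //.
exact: connected_component_sub Cp.
Qed.

End PositiveCone.

Lemma pos_half_cone_open k (G : 'M[int]_k) p : open (pos_half_cone G p).
Proof.
have cq : continuous (fun z : 'rV[R]_k => rform G z z).
  by apply: rform_continuous => z; exact: cvg_id.
rewrite (_ : pos_half_cone G p = (fun z => rform G z z) @^-1` [set x | 0 < x] `&`
  (fun z => rform G z p) @^-1` [set x | 0 < x]) //.
by apply: openI; apply: open_comp (@open_gt _ 0) => z _; [exact: cq | exact: rform_continuousl].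
Qed.

Lemma pos_half_coneZ k (G : 'M[int]_k) p (c : R) z : 0 < c ->
  pos_half_cone G p z -> pos_half_cone G p (c *: z).
Proof.
move=> c0 [z0 zp]; rewrite /pos_half_cone /= !rformZl rformZr mulrA.
by split; apply: mulr_gt0 => //; exact: mulr_gt0.
Qed.

Lemma open_cone_int_point k (S : set 'rV[R]_k) x : open S -> S x ->
  (forall (c : R) z, 0 < c -> S z -> S (c *: z)) -> exists q : 'rV[int]_k, S (toR q).
Proof.
move=> oS Sx S_cone; have /nbhs_ballP[e /= e0 eS] : nbhs x S by exact: open_nbhs_nbhs.
pose N : R := (Num.trunc e^-1).+1%:R.
have N0 : 0 < N by rewrite ltr0n.
have Ne : N^-1 < e.
  by rewrite -[N^-1]mulr1 ltr_pdivrMl // -ltr_pdivrMr // mul1r truncnS_gt.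
pose q : 'rV[int]_k := \row_i Num.floor (N * x ord0 i).
exists q; rewrite -(scalerKV (lt0r_neq0 N0) (toR q)); apply: S_cone => //.
apply: eS; split => // i j; rewrite -ball_normE /= (ord1 i) !mxE.
have /andP[fl fu] := floor_itv (N * x ord0 j); rewrite intrD in fu.
rewrite (_ : _ - _ = N^-1 * (N * x ord0 j - (Num.floor (N * x ord0 j))%:~R)); last first.
  by field; rewrite gt_eqF.
rewrite normrM gtr0_norm ?invr_gt0 // ger0_norm ?subr_ge0 //.
apply: le_lt_trans Ne; rewrite -[leRHS]mulr1 ler_wpM2l ?invr_ge0 ?ltW //; lra.
Qed.

Section GenericVector.
Variable k : nat.

(* ['rV[R]_k] is normed and complete, but the library does not declare the join
   of the two structures that [Baire] needs. *)
Definition complete_rV := 'rV[R]_k.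
HB.instance Definition _ := NormedModule.on complete_rV.
HB.instance Definition _ := Complete.on complete_rV.

Lemma generic_vector (G : 'M[int]_k) : exists w : 'rV[R]_k,
  forall r : 'rV[int]_k, zform G r r != 0 -> rform G (toR r) w != 0.
Proof.
pose S (r : 'rV[int]_k) : set 'rV[R]_k :=
  if zform G r r != 0 then [set w | rform G (toR r) w != 0] else setT.
pose F (i : nat) := if unpickle i is Some r then S r else setT.
have odT : open (@setT 'rV[R]_k) /\ dense (@setT 'rV[R]_k).
  by split; [exact: openT | move=> O [x Ox] _; exists x].
have odS r : open (S r) /\ dense (S r).
  rewrite /S; case: ifPn => // rr; split.
    by apply: open_comp (@open_neq _ 0) => w _; exact: rform_continuousr.
  move=> O [d Od] oO; have [dr|] := eqVneq (rform G (toR r) d) 0; last by exists d.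
  have [t t0 Ot] : exists2 t, 0 < t & O (d + t *: toR r).
    apply: exists_gt0_near0; first exact: line_continuous.
    by rewrite scale0r addr0; apply: open_nbhs_nbhs.
  exists (d + t *: toR r); split => //=.
  rewrite rformDr rformZr dr add0r rform_intr.
  by apply: mulf_neq0; [exact: lt0r_neq0 | rewrite intr_eq0].
have odF i : open (F i) /\ dense (F i) by rewrite /F; case: (unpickle i).
have [|w [_ Fw]] := @Baire R complete_rV F odF setT _ openT; first by exists 0.
by exists w => r rr; have := Fw (pickle r) I; rewrite /F pickleK /S rr.
Qed.

End GenericVector.

Lemma sign_normalize k (G : 'M[int]_k) (v a y : 'rV[R]_k) : 0 < rform G v v ->
  (0 <= rform G a (normalize G v) * rform G a y) = (0 <= rform G a v * rform G a y).
Proof. by move=> v0; rewrite /normalize rformZr -mulrA pmulr_rge0 // invsqrt_gt0. Qed.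

Lemma normalize_chamber_domain k (G : 'M[int]_k) (P : set 'rV[R]_k) v :
  (forall x, P x -> P = pos_half_cone G x) -> P v ->
  (forall r, is_root G r -> rform G (toR r) v != 0) -> chamber_domain G P (normalize G v).
Proof.
move=> P_half_cone Pv v_root; have [v0 _] : pos_half_cone G v v by rewrite -(P_half_cone v Pv).
have c0 := invsqrt_gt0 v0.
split; first split.
- rewrite (P_half_cone v Pv); split; first by rewrite rform_normalize.
  by rewrite /normalize rformZl mulr_gt0.
- exact: rform_normalize.
- move=> r rr; rewrite /normalize rformZr.
  by apply: mulf_neq0; [exact: lt0r_neq0 | exact: v_root].
Qed.

Section ChamberClosure.
Variables (k : nat) (G : 'M[int]_k) (P : set 'rV[R]_k) (p : 'rV[R]_k).
Hypotheses (sG : G^T = G) (P_half_cone : forall x, P x -> P = pos_half_cone G x).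
Hypothesis Dp : chamber_domain G P p.
Local Notation D := (connected_component (chamber_domain G P) p).

Lemma chamber_closure_root_sign y r : closure D y -> is_root G r ->
  0 <= rform G (toR r) p * rform G (toR r) y.
Proof.
move=> Dy rr; have [_ /(_ r rr) rp] := Dp.
pose f z := rform G (rform G (toR r) p *: toR r) z.
have fE z : f z = rform G (toR r) p * rform G (toR r) z by rewrite /f rformZl.
have D_ge0 : D `<=` f @^-1` [set x | 0 <= x].
  move=> z Dz; rewrite /preimage /=; apply: ltW; apply: (connected_continuous_gt0 (f := f)
    (@component_connected _ _ _) (@rform_continuousr _ G _) _ _ Dz).
  - by move=> u /connected_component_sub [_ /(_ r rr) ru]; rewrite fE mulf_neq0.
  - exact: connected_component_refl.
  - by rewrite fE -expr2 sqr_gt0.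
have cl : closed (f @^-1` [set x | 0 <= x]).
  by apply: closed_comp (@closed_ge _ 0) => z _; exact: rform_continuousr.
by have := closureS D_ge0 Dy; rewrite -((closure_id _).1 cl) /= fE.
Qed.

Lemma chamber_domain_comb y (a b : R) : hyp_space G P y -> 0 < a -> 0 <= b ->
  (forall r, is_root G r -> 0 <= rform G (toR r) p * rform G (toR r) y) ->
  chamber_domain G P (normalize G (a *: p + b *: y)).
Proof.
move=> [Py y1] a0 b0 sgn; have [[Pp p1] p_root] := Dp.
have yp : 0 < rform G y p by move: Py; rewrite (P_half_cone Pp) => -[].
have w0 : 0 < rform G (a *: p + b *: y) (a *: p + b *: y).
  by apply: rform_comb_sqr_gt0; rewrite ?p1 ?y1 ?ltr01 ?(ltW yp) ?(ltW a0) //; lra.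
have c0 := invsqrt_gt0 w0.
split; first split.
- rewrite (P_half_cone Pp); split; first by rewrite rform_normalize.
  rewrite /normalize rformZl pmulr_rgt0 // rformDl !rformZl p1 mulr1.
  by have := mulr_ge0 b0 (ltW yp); lra.
- exact: rform_normalize.
move=> r rr; rewrite /normalize rformZr; apply: mulf_neq0; first exact: lt0r_neq0 c0.
rewrite rformDr !rformZr.
have rp := p_root r rr; have ry := sgn r rr.
have : 0 < rform G (toR r) p * (a * rform G (toR r) p + b * rform G (toR r) y).
  by have := mulr_gt0 a0 (sqr_gt0 rp); have := mulr_ge0 b0 ry; nra.
by apply: contraTneq => ->; rewrite mulr0 ltxx.
Qed.

Lemma root_sign_chamber_closure y : hyp_space G P y ->
  (forall r, is_root G r -> 0 <= rform G (toR r) p * rform G (toR r) y) -> closure D y.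
Proof.
move=> hy sgn O O_y; have [[Pp p1] _] := Dp; have [Py y1] := hy.
have c0 : {for 0, continuous (fun t : R => normalize G (y + t *: p))}.
  by apply: normalize_continuous; [exact: line_continuous | rewrite scale0r addr0 y1].
have [t t0 Ot] : exists2 t, 0 < t & O (normalize G (y + t *: p)).
  by apply: exists_gt0_near0 c0 _; rewrite scale0r addr0 normalize_id.
exists (normalize G (y + t *: p)); split => //.
have gE s : p + s *: (y + t *: p - p) = (1 - s + s * t) *: p + s *: y.
  by apply/rowP => i; rewrite !mxE; ring.
have := connected_component_path (A := chamber_domain G P)
  (g := fun s : R => normalize G (p + s *: (y + t *: p - p))).
rewrite scale0r addr0 scale1r [p + _]addrC subrK normalize_id //.
apply => s /andP[s0 s1]; have a0 : 0 < 1 - s + s * t by nra.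
split; last by rewrite gE; exact: chamber_domain_comb.
apply: normalize_continuous; first exact: line_continuous.
rewrite gE; apply: rform_comb_sqr_gt0; rewrite ?p1 ?y1 ?ltr01 ?(ltW a0) //; last by lra.
by move: Py; rewrite (P_half_cone Pp) => -[_ /ltW].
Qed.

Lemma chamber_closureE y : hyp_space G P y ->
  closure D y <-> forall r, is_root G r -> 0 <= rform G (toR r) p * rform G (toR r) y.
Proof.
move=> hy; split; last exact: root_sign_chamber_closure.
by move=> Dy r; exact: chamber_closure_root_sign.
Qed.

End ChamberClosure.

Section Main.
Variables (n m : nat) (G : 'M[int]_n) (H : 'M[int]_m) (P : set 'rV[R]_n) (x0 : 'rV[R]_n).
Hypotheses (eG : even_lattice G) (hG : hyperbolic R G).
Hypotheses (eH : even_lattice H) (nH : neg_definite R H).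
Hypotheses (x0_pos : pos_cone G x0) (Peq : P = connected_component (pos_cone G) x0).

Local Notation GM := (gram_sum G H).
Let sG : G^T = G := eG.1.
Let dG : \det G != 0 := eG.2.1.
Let sGM : GM^T = GM := gram_sum_sym eG.1 eH.1.
Let GM_pos_neq0 := @gram_sum_pos_rform_neq0 _ _ _ _ eG.1 eH.1 hG (neg_definite_le0 nH).

Definition PLM : set 'rV[R]_(n + m) :=
  \bigcup_(C in [set y | exists2 x, P x & y = connected_component (pos_cone GM) (emb m x)]) C.

Lemma P_half_cone x : P x -> P = pos_half_cone G x.
Proof.
by rewrite Peq => Cx; exact: (pos_component_half_cone sG (@pos_rform_neq0 _ _ sG hG) Cx).
Qed.

Lemma P_pos x : P x -> 0 < rform G x x.
Proof. by rewrite Peq => /connected_component_sub. Qed.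

Lemma Px0 : P x0.
Proof. by rewrite Peq; exact: connected_component_refl. Qed.

Lemma PLME : PLM = connected_component (pos_cone GM) (emb m x0).
Proof.
have compE x : P x -> connected_component (pos_cone GM) (emb m x) =
                      connected_component (pos_cone GM) (emb m x0).
  move=> Px; apply/esym/same_connected_component.
  rewrite (pos_componentE sGM GM_pos_neq0); last by rewrite rform_emb; exact: P_pos Px0.
  by move: Px; rewrite (P_half_cone Px0) /pos_half_cone /= !rform_emb.
apply/seteqP; split => [z [_ [x Px ->]]|z Cz]; first by rewrite compE.
by exists (connected_component (pos_cone GM) (emb m x0)) => //; exists x0 => //; exact: Px0.
Qed.

Lemma PLM_half_cone z : PLM z -> PLM = pos_half_cone GM z.
Proof. by rewrite PLME => Cz; exact: (pos_component_half_cone sGM GM_pos_neq0 Cz). Qed.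

Lemma PLM_pos z : PLM z -> 0 < rform GM z z.
Proof. by rewrite PLME => /connected_component_sub. Qed.

Lemma PLM_emb x : PLM (emb m x) <-> P x.
Proof.
have PLMx0 : PLM (emb m x0).
  by rewrite PLME; apply: connected_component_refl; rewrite /pos_cone /= rform_emb.
by rewrite (PLM_half_cone PLMx0) (P_half_cone Px0) /pos_half_cone /= !rform_emb.
Qed.

Lemma hyp_space_emb x : hyp_space GM PLM (emb m x) <-> hyp_space G P x.
Proof.
rewrite /hyp_space /= rform_emb.
by split=> -[/PLM_emb ? ?]; [|split => //; apply/PLM_emb].
Qed.

Lemma P_sign (a : 'rV[R]_n) p : a != 0 -> 0 <= rform G a a -> P p ->
  forall x, P x -> 0 < rform G a p * rform G a x.
Proof.
move=> a0 aa Pp x Px; have ap := nonneg_rform_neq0 sG hG dG a0 aa (P_pos Pp).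
pose f z := rform G (rform G a p *: a) z.
have fE z : f z = rform G a p * rform G a z by rewrite /f rformZl.
have cP : connected P by rewrite Peq; exact: (@component_connected _ _ _).
have f_neq0 (z : 'rV[R]_n) : P z -> f z != 0.
  move=> Pz; rewrite fE; apply: mulf_neq0; first exact: ap.
  by have := nonneg_rform_neq0 sG hG dG a0 aa (P_pos Pz).
have fp : 0 < f p by rewrite fE -expr2; exact: sqr_gt0.
have cf : continuous f by exact: rform_continuousr.
by rewrite -fE; have := connected_continuous_gt0 cP cf f_neq0 Pp Px fp.
Qed.

Section Witnesses.
Variables (q : 'rV[int]_n) (v : 'rV[R]_n) (w : 'rV[R]_m).
Hypothesis Pq : P (toR q).
Hypothesis v_gen : forall r : 'rV[int]_n, zform G r r != 0 -> rform G (toR r) v != 0.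
Hypothesis w_gen : forall r : 'rV[int]_m, zform H r r != 0 -> rform H (toR r) w != 0.

Local Notation q' := (toR q : 'rV[R]_n).
Local Notation Q := (rform G q' q').

Lemma Q_ge1 : 1 <= Q.
Proof. by have := P_pos Pq; rewrite rform_intr ltr0z ler1z; lia. Qed.

(* Roots orthogonal to [q] do not vanish at [u] (resp. [z0]) by genericity of [v]
   (resp. [w]). *)
Definition vperp := perp G q' v.
Definition eps := tiny (- rform G vperp vperp).
Definition u := q' + eps *: vperp.

Lemma vperp_orth : rform G q' vperp = 0.
Proof. exact: rform_perp. Qed.

Lemma vperp_sqr_le0 : 0 <= - rform G vperp vperp.
Proof. by rewrite oppr_ge0; have := rform_orth_le0 sG hG (P_pos Pq) vperp_orth. Qed.

Lemma rform_u a : rform G a u = rform G a q' + eps * rform G a vperp.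
Proof. by rewrite rformDr rformZr. Qed.

Lemma rform_u_u : rform G u u = Q - eps ^+ 2 * - rform G vperp vperp.
Proof. by rewrite /u -{1 2}[q']scale1r rform_comb_sqr // vperp_orth; ring. Qed.

Lemma u_sqr_ge : 15 / 16 <= rform G u u.
Proof.
rewrite rform_u_u; have := tiny_sqrM_lt vperp_sqr_le0; have := Q_ge1.
rewrite /eps; lra.
Qed.

Lemma Pu : P u.
Proof.
rewrite (P_half_cone Pq); split; first by have := u_sqr_ge; lra.
rewrite (rformC sG) rform_u vperp_orth mulr0 addr0; exact: P_pos.
Qed.

Lemma u_root_sign (a : 'rV[int]_n) (X : R) :
  -2 <= rform G (toR a) (toR a) -> rform G (toR a) q' != 0 ->
  4 * X ^+ 2 < rform G (toR a) q' ^+ 2 ->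
  0 < rform G (toR a) q' * (rform G (toR a) u + X).
Proof.
move=> a2 Y0 small_X; have Y1 : 1 <= rform G (toR a) q' ^+ 2.
  by move: Y0; rewrite rform_intr intr_eq0; exact: intr_sqr_ge1.
rewrite rform_u; apply: perturb_sign small_X; apply: tiny_perturb vperp_sqr_le0 _ _.
  lra.
by have := rform_orth_bound sG hG Q_ge1 vperp_orth a2 Y1.
Qed.

Lemma u_root_neq0 (a : 'rV[int]_n) : is_root G a -> rform G (toR a) u != 0.
Proof.
move=> ra; have a2 : rform G (toR a) (toR a) = -2 by rewrite rform_intr ra.
have [Y0|Y0] := eqVneq (rform G (toR a) q') 0.
  rewrite rform_u Y0 add0r /vperp rform_perp_r // Y0 mulr0 subr0.
  apply: mulf_neq0; first exact: lt0r_neq0 (tiny_gt0 vperp_sqr_le0).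
  apply: mulf_neq0; first by apply: lt0r_neq0; have := Q_ge1; lra.
  by apply: v_gen; rewrite ra.
have : 0 < rform G (toR a) q' * (rform G (toR a) u + 0).
  by apply: u_root_sign; rewrite ?a2 ?lexx // expr0n /= mulr0; exact: sqr_gt0.
by rewrite addr0; apply: contraTneq => ->; rewrite mulr0 ltxx.
Qed.

Lemma w_sqr_le0 : 0 <= - rform H w w.
Proof. by rewrite oppr_ge0 neg_definite_le0. Qed.

Definition delta := tiny (- rform H w w).
Definition z0 := row_mx u (delta *: w).

Lemma rform_z0 a b : rform GM (row_mx a b) z0 = rform G a u + delta * rform H b w.
Proof. by rewrite rform_gram_sum rformZr. Qed.

Lemma PLM_z0 : PLM z0.
Proof.
rewrite (PLM_half_cone ((PLM_emb _).2 Pq)); split; rewrite /z0.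
  rewrite rform_gram_sum rformZl rformZr mulrA -expr2.
  by have := tiny_sqrM_lt w_sqr_le0; have := u_sqr_ge; rewrite /delta; lra.
rewrite rform_row_emb (rformC sG) rform_u vperp_orth mulr0 addr0.
exact: P_pos Pq.
Qed.

Lemma mixed_root_left_ge0 a b : is_root GM (row_mx a b) -> b != 0 ->
  0 <= rform G (toR a) (toR a).
Proof.
rewrite /is_root zform_gram_sum => ab b0; have := neg_even_zform_le eH nH b0.
by rewrite rform_intr ler0z; lia.
Qed.

Lemma mixed_root_sign a b : is_root GM (row_mx a b) -> a != 0 -> b != 0 ->
  0 < rform G (toR a) q' * rform GM (toR (row_mx a b)) z0.
Proof.
move=> rr a0 b0; have A0 := mixed_root_left_ge0 rr b0.
have Y0 := nonneg_rform_neq0 sG hG dG (intr_row_neq0 a0) A0 (P_pos Pq).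
set A := rform G (toR a) (toR a) in A0 *; set Y := rform G (toR a) q' in Y0 *.
have Y1 : 1 <= Y ^+ 2 by move: Y0; rewrite /Y rform_intr intr_eq0; exact: intr_sqr_ge1.
have AB : A + rform H (toR b) (toR b) = -2.
  by rewrite /A !rform_intr -intrD -zform_gram_sum rr.
have AY : A <= Y ^+ 2.
  apply: le_trans (rform_reverse_CS sG hG _ (P_pos Pq)).
  by apply: ler_peMl A0 Q_ge1.
have bw : rform H (toR b) w ^+ 2 <= 3 * Y ^+ 2 * - rform H w w.
  have := @rform_CS_le0 _ H eH.1 (toR b) w (fun s t => neg_definite_le0 nH _).
  have : 0 <= (3 * Y ^+ 2 - 2 - A) * - rform H w w by rewrite mulr_ge0 ?w_sqr_le0 //; lra.
  rewrite (_ : rform H (toR b) (toR b) = -2 - A); last by lra.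
  lra.
have A2 : -2 <= A by lra.
have small : 4 * (delta * rform H (toR b) w) ^+ 2 < Y ^+ 2.
  by apply: tiny_perturb w_sqr_le0 _ bw; lra.
by rewrite map_row_mx rform_z0; have := u_root_sign A2 Y0 small.
Qed.

Lemma z0_root_neq0 r : is_root GM r -> rform GM (toR r) z0 != 0.
Proof.
rewrite -[r]hsubmxK map_row_mx rform_z0 /is_root.
set a := lsubmx r; set b := rsubmx r => rr.
have [b0|b0] := eqVneq b 0.
  by move: rr; rewrite b0 zform_row_mx0 map_mx0 rform0l mulr0 addr0; exact: u_root_neq0.
have [a0|a0] := eqVneq a 0.
  move: rr; rewrite a0 zform_row_0mx map_mx0 rform0l add0r => rr.
  by apply: mulf_neq0; [exact: lt0r_neq0 (tiny_gt0 w_sqr_le0) | apply: w_gen; rewrite rr].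
have := mixed_root_sign rr a0 b0; rewrite map_row_mx rform_z0.
by apply: contraTneq => ->; rewrite mulr0 ltxx.
Qed.

Lemma root_signs_emb x : P x ->
  (forall r, is_root G r -> 0 <= rform G (toR r) u * rform G (toR r) x) <->
  (forall r, is_root GM r -> 0 <= rform GM (toR r) z0 * rform GM (toR r) (emb m x)).
Proof.
move=> Px; split => sgn r; last first.
  move=> rr; have := sgn (row_mx r 0); rewrite /is_root zform_row_mx0 => /(_ rr).
  by rewrite map_row_mx map_mx0 rform_z0 rform_row_emb rform0l mulr0 addr0.
rewrite /is_root -[r]hsubmxK map_row_mx rform_z0 rform_row_emb.
set a := lsubmx r; set b := rsubmx r => rr.
have [b0|b0] := eqVneq b 0.
  by move: rr; rewrite b0 zform_row_mx0 map_mx0 rform0l mulr0 addr0; exact: sgn.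
have [a0|a0] := eqVneq a 0; first by rewrite a0 map_mx0 !rform0l mulr0.
have := mixed_root_sign rr a0 b0; rewrite map_row_mx rform_z0 => pos.
apply: ltW; apply: mulr_gt0_same_sign pos _.
by have := P_sign (intr_row_neq0 a0) (mixed_root_left_ge0 rr b0) Pq Px.
Qed.

Lemma chambers_match : exists (DL : set 'rV[R]_n) (DLM : set 'rV[R]_(n + m)),
  is_chamber G P DL /\ is_chamber GM PLM DLM /\
  forall x, closure_in (hyp_space G P) DL x <-> closure_in (hyp_space GM PLM) DLM (emb m x).
Proof.
have Du := normalize_chamber_domain P_half_cone Pu u_root_neq0.
have Dz := normalize_chamber_domain PLM_half_cone PLM_z0 z0_root_neq0.
pose DL := connected_component (chamber_domain G P) (normalize G u).
pose DLM := connected_component (chamber_domain GM PLM) (normalize GM z0).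
have clL y : hyp_space G P y -> closure DL y <->
    forall r, is_root G r -> 0 <= rform G (toR r) u * rform G (toR r) y.
  move=> hy; apply: iff_trans (chamber_closureE sG P_half_cone Du hy) _.
  by split => sgn r /sgn; rewrite sign_normalize // (P_pos Pu).
have clLM y : hyp_space GM PLM y -> closure DLM y <->
    forall r, is_root GM r -> 0 <= rform GM (toR r) z0 * rform GM (toR r) y.
  move=> hy; apply: iff_trans (chamber_closureE sGM PLM_half_cone Dz hy) _.
  by split => sgn r /sgn; rewrite sign_normalize // (PLM_pos PLM_z0).
exists DL, DLM; split; first by exists (normalize G u).
split; first by exists (normalize GM z0).
move=> x; split => -[cl hx].
- have hx' := (hyp_space_emb x).2 hx.
  by split => //; apply/(clLM _ hx')/(root_signs_emb hx.1)/(clL _ hx).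
- have hx' := (hyp_space_emb x).1 hx.
  by split => //; apply/(clL _ hx')/(root_signs_emb hx'.1)/(clLM _ hx).
Qed.

End Witnesses.
End Main.

End Chambers.

Theorem lemma2p5 (R : realType) (n m : nat) (G : 'M[int]_n) (H : 'M[int]_m)
    (P : set 'rV[R]_n) :
  even_lattice G -> hyperbolic R G ->
  even_lattice H -> neg_definite R H ->
  is_pos_component G P ->
  let GM := gram_sum G H in
  let PM := [set y | exists2 x, P x & y = connected_component (pos_cone GM) (emb m x)] in
  let PLM := \bigcup_(C in PM) C in
  exists (DL : set 'rV[R]_n) (DLM : set 'rV[R]_(n + m)),
    is_chamber G P DL /\ is_chamber GM PLM DLM /\
    forall x : 'rV[R]_n,
      closure_in (hyp_space G P) DL x <->
      closure_in (hyp_space GM PLM) DLM (emb m x).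
Proof.
move=> eG hG eH nH [x0 [x0_pos Peq]] GM PM PLM.
have P_x0 : P = pos_half_cone G x0 := P_half_cone eG hG Peq (Px0 x0_pos Peq).
have [q Pq] : exists q : 'rV[int]_n, P (map_mx intr q).
  rewrite P_x0; have := open_cone_int_point (@pos_half_cone_open _ _ G x0)
    (conj x0_pos x0_pos) (fun c z => @pos_half_coneZ _ _ G x0 c z).
  by [].
have [v v_gen] := generic_vector R G.
have [w w_gen] := generic_vector R H.
exact: (chambers_match eG hG eH nH x0_pos Peq Pq v_gen w_gen).
Qed.
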